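(* Let $Y\in\{0,1\}$ be a binary random label with $0<P(Y=1)<1$, and let $X=(\mathbf{x}_1,\dots,\mathbf{x}_M)$ be a bag of $M$ random instances which are conditionally independent given $Y$, each having a conditional density $p(\mathbf{x}_m\mid Y)$. Let $I\subseteq\{1,\dots,M\}$ be the set of informative instances, with $|I|=\tilde M\ge 1$, where every uninformative instance $m\notin I$ satisfies $p(\mathbf{x}_m\mid Y=1)=p(\mathbf{x}_m\mid Y=0)$. Set $u_m=1$ if $m\in I$ and $u_m=0$ otherwise. Let $g$ be a real-valued function with $\sigma(g(\mathbf{x}_m))=P(Y=1\mid \mathbf{x}_m)$ for every $m\in I$, where $\sigma(t)=1/(1+e^{-t})$, and define $$f(X)=\frac{1}{\tilde M}\sum_{m=1}^{M} g(\mathbf{x}_m)\,u_m .$$ Then $$\operatorname{logit}(Y=1\mid X)=\tilde M\, f(X)+C,$$ where $\operatorname{logit}(Y=1\mid X)=\log\frac{P(Y=1\mid X)}{P(Y=0\mid X)}$ and $C$ is a constant that does not depend on $X$ (it depends only on $\tilde M$ and the prior $P(Y=1)$).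
   Context: In the paper, $g=g_{\boldsymbol\theta}$ is a neural network whose sigmoid output $\sigma(g(\mathbf{x}))$ is interpreted as the probability that a bag (whole-slide image) is malignant given a single instance (image patch) $\mathbf{x}$, and $f(X)$ is the slide-level prediction obtained by averaging $g$ over the $\tilde M$ instances identified as informative. For a probability $P(\cdot)$, $\operatorname{logit}(\cdot)=\log\big(P(\cdot)/(1-P(\cdot))\big)$. *)

From mathcomp Require Import all_boot all_order all_algebra.
From mathcomp Require Import all_classical all_reals all_analysis.
Set Implicit Arguments. Unset Strict Implicit. Unset Printing Implicit Defensive.
Import Order.TTheory GRing.Theory Num.Theory.
Local Open Scope ring_scope.

Section Defs.
Variables (R : realType).

Definition sigmoid (t : R) : R := 1 / (1 + expR (- t)).

Definition logit (p : R) : R := ln (p / (1 - p)).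

Variables (T : Type) (M : nat).
(* prior P(Y=1) = pi; class-conditional instance densities
   p true m t = p(x_m = t | Y = 1),  p false m t = p(x_m = t | Y = 0). *)
Variables (pi : R) (p : bool -> 'I_M -> T -> R).

Definition post_inst (m : 'I_M) (t : T) : R :=
  pi * p true m t / (pi * p true m t + (1 - pi) * p false m t).

(* Bayes' rule for the bag, using conditional independence given Y:
   the class-conditional joint density of X is the product of the
   instance densities.  P(Y=1 | X = x) *)
Definition post_bag (x : 'I_M -> T) : R :=
  pi * (\prod_m p true m (x m)) /
  (pi * (\prod_m p true m (x m)) + (1 - pi) * \prod_m p false m (x m)).

Definition u (I : {set 'I_M}) (m : 'I_M) : R := (m \in I)%:R.

Definition f_bag (I : {set 'I_M}) (g : T -> R) (x : 'I_M -> T) : R :=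
  (#|I|%:R)^-1 * \sum_m g (x m) * u I m.

End Defs.

From mathcomp Require Import all_boot all_order all_algebra.
From mathcomp Require Import all_classical all_reals all_analysis.
From mathcomp Require Import ring.
Set Implicit Arguments. Unset Strict Implicit. Unset Printing Implicit Defensive.
Import Order.TTheory GRing.Theory Num.Theory.
Local Open Scope ring_scope.

(* By Bayes' rule, posterior odds are prior odds times the likelihood ratio,
   and by conditional independence the likelihood ratio of the bag is the
   product of those of its instances, uninformative ones contributing 1.
   So logit P(Y=1|X) = log prior odds + sum over I of the instance log
   likelihood ratios, while a calibrated g satisfies
   g(x_m) = log prior odds + log likelihood ratio of x_m.  Summing g over I
   therefore recovers the bag logit up to (|I| - 1) times the log prior
   odds. *)

Section Logit.
Variable R : realType.

Lemma logit_sigmoid (t : R) : logit (sigmoid t) = t.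
Proof.
have e_gt0 : 0 < expR (- t) by rewrite expR_gt0.
have d_neq0 : 1 + expR (- t) != 0 by rewrite gt_eqF // addr_gt0.
rewrite /logit; have -> : sigmoid t / (1 - sigmoid t) = (expR (- t))^-1.
  by rewrite /sigmoid; field; rewrite d_neq0 gt_eqF.
by rewrite -expRN opprK expRK.
Qed.

Lemma logit_bayes (a L1 L0 : R) : 0 < a < 1 -> 0 < L1 -> 0 < L0 ->
  logit (a * L1 / (a * L1 + (1 - a) * L0)) = ln (a / (1 - a)) + ln (L1 / L0).
Proof.
move=> /andP[a_gt0 a_lt1] L1_gt0 L0_gt0.
have b_gt0 : 0 < 1 - a by rewrite subr_gt0.
have d_gt0 : 0 < a * L1 + (1 - a) * L0 by rewrite addr_gt0 ?mulr_gt0.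
rewrite /logit -lnM ?posrE ?divr_gt0 //; congr ln.
by field; rewrite addrAC subrr add0r !gt_eqF ?mulr_gt0.
Qed.

Lemma ln_prod (I : Type) (r : seq I) (P : pred I) (F : I -> R) :
  (forall i, P i -> 0 < F i) ->
  ln (\prod_(i <- r | P i) F i) = \sum_(i <- r | P i) ln (F i).
Proof.
move=> F_gt0; rewrite -[RHS]expRK expR_sum; congr ln.
by apply: eq_bigr => i Pi; rewrite lnK ?posrE ?F_gt0.
Qed.

End Logit.

Section Bag.
Variables (R : realType) (T : Type) (M : nat).
Variables (pi : R) (p : bool -> 'I_M -> T -> R).
Hypothesis pi01 : 0 < pi < 1.

Definition log_likelihood_ratio (m : 'I_M) (t : T) : R :=
  ln (p true m t / p false m t).

Lemma logit_post_inst (m : 'I_M) (t : T) :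
  0 < p true m t -> 0 < p false m t ->
  logit (post_inst pi p m t) = ln (pi / (1 - pi)) + log_likelihood_ratio m t.
Proof. exact: logit_bayes. Qed.

Lemma logit_post_bag (x : 'I_M -> T) :
  (forall (y : bool) (m : 'I_M), 0 < p y m (x m)) ->
  logit (post_bag pi p x) =
    ln (pi / (1 - pi)) + \sum_m log_likelihood_ratio m (x m).
Proof.
move=> p_gt0; rewrite logit_bayes ?prodr_gt0 //; congr (_ + _).
by rewrite -prodf_div ln_prod // => m _; rewrite divr_gt0.
Qed.

End Bag.

Lemma card_mulr_f_bag (R : realType) (T : Type) (M : nat)
    (I : {set 'I_M}) (g : T -> R) (x : 'I_M -> T) :
  (0 < #|I|)%N -> #|I|%:R * f_bag I g x = \sum_(m in I) g (x m).
Proof.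
move=> I_gt0; rewrite /f_bag mulrA divff ?pnatr_eq0 -?lt0n // mul1r.
rewrite [RHS]big_mkcond /=; apply: eq_bigr => m _.
by rewrite /u; case: (m \in I); rewrite ?mulr1 ?mulr0.
Qed.

Theorem proposition1 (R : realType) (T : Type) (M : nat)
  (pi : R) (p : bool -> 'I_M -> T -> R) (I : {set 'I_M}) (g : T -> R) :
  0 < pi < 1 ->
  (0 < #|I|)%N ->
  (forall m : 'I_M, m \notin I -> forall t : T, p true m t = p false m t) ->
  exists C : R, forall x : 'I_M -> T,
    (forall (y : bool) (m : 'I_M), 0 < p y m (x m)) ->
    (forall m : 'I_M, m \in I -> sigmoid (g (x m)) = post_inst pi p m (x m)) ->
    logit (post_bag pi p x) = #|I|%:R * f_bag I g x + C.
Proof.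
move=> pi01 I_gt0 uninformative.
set q := ln (pi / (1 - pi)).
exists ((1 - #|I|%:R) * q) => x p_gt0 calibrated.
have g_llr m : m \in I -> g (x m) = q + log_likelihood_ratio p m (x m).
  by move=> mI; rewrite -[g _]logit_sigmoid calibrated // logit_post_inst.
have llr_uninformative m : m \notin I -> log_likelihood_ratio p m (x m) = 0.
  by move=> mI; rewrite /log_likelihood_ratio uninformative // divff ?ln1 // gt_eqF.
rewrite logit_post_bag // card_mulr_f_bag // (bigID (mem I)) /=.
rewrite [X in _ + (_ + X)]big1 ?addr0; last exact: llr_uninformative.
rewrite (eq_bigr _ g_llr) big_split sumr_const /= -/q -[q *+ _]mulr_natr.
(* [ring] does not terminate if left to reify the cardinal [#|I|] itself. *)
by move: #|I|%:R => n; ring.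
Qed.
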